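(* The clone $\mathscr{C}_{I_{\bar d=0}}$ is a Borel subset of $\mathscr{O}$.
   Context: Let $\mathbb{N}=\{0,1,2,\dots\}$, $\mathscr{O}^{(n)}=\mathbb{N}^{\mathbb{N}^n}$ for $n\ge1$, and $\mathscr{O}=\bigcup_{n\ge1}\mathscr{O}^{(n)}$, where each $\mathscr{O}^{(n)}$ carries the product topology of the discrete topology on $\mathbb{N}$ and $\mathscr{O}$ carries the sum topology (a Polish space). For $A\subseteq\mathbb{N}$ the upper density is $\bar d(A)=\limsup_{n\to\infty}\frac{|A\cap[0,n)|}{n}$. Let $I_{\bar d=0}$ be the ideal of subsets of $\mathbb{N}$ of upper density $0$, and let $\mathscr{C}_{I_{\bar d=0}}$ be the set of all $f\in\mathscr{O}$, say $f$ $k$-ary, such that $f[A^k]\in I_{\bar d=0}$ for every $A\in I_{\bar d=0}$. *)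

From HB Require Import structures.
From mathcomp Require Import all_boot all_order all_algebra.
From mathcomp Require Import boolp classical_sets reals sequences measure.
From mathcomp Require Import Rstruct.
Set Implicit Arguments. Unset Strict Implicit. Unset Printing Implicit Defensive.
Import Order.TTheory GRing.Theory Num.Theory.
Local Open Scope classical_set_scope.
Local Open Scope ring_scope.

Definition Rr : realType := Rdefinitions.R.

Definition upper_density (A : set nat) : Rr :=
  limn_sup (fun n : nat => (\sum_(i < n) ((i : nat) \in A)%:R) / n%:R : Rr).

Definition Idens0 : set (set nat) := [set A | upper_density A = 0].

(* O^(k+1) = N^(N^(k+1)); k-ary operations for k >= 1 are indexed by k.-1 *)
Definition Ops (k : nat) := (k.+1).-tuple nat -> nat.
Definition Op := {k : nat & Ops k}.

Definition arity (F : Op) : nat := (projT1 F).+1.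

(* product topology of discrete N on X -> N: basic neighbourhoods fix
   finitely many coordinates *)
Definition prod_open (X : Type) (U : set (X -> nat)) : Prop :=
  forall f, U f -> exists F : list X,
    forall g, (forall x, List.In x F -> g x = f x) -> U g.

(* sum topology on O *)
Definition O_open (U : set Op) : Prop :=
  forall k, prod_open (fun f : Ops k => U (existT _ k f)).

Definition O_Borel (B : set Op) : Prop := <<s O_open >> B.

Definition op_image (F : Op) (A : set nat) : set nat :=
  [set projT2 F t | t in [set t : (projT1 F).+1.-tuple nat | forall i, A (tnth t i)]].

Definition C_Idens0 : set Op :=
  [set F | forall A, Idens0 A -> Idens0 (op_image F A)].

(* Write N_S(m) = |S ∩ [0,m)| and code finite subsets of N by natural numbers.
   Call f a blow-up if there are q and a finite set a such that for all j and N
   some finite 2^j-sparse set p (meaning 2^j N_p(m) <= m for all m) and some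
   m >= N satisfy m < (q+1) N_{f[(a ∪ p)^k]}(m).  Each such condition only
   constrains finitely many values of f, so it is open, and the blow-ups form a
   countable union of countable intersections of countable unions of open sets.
   A blow-up is outside the clone: the union of a with one witness p_j for each
   j has density zero because the p_j get geometrically sparser, yet its image
   has upper density at least 1/(q+1).  Conversely, if f is no blow-up and A has
   density zero, cut A by b_0 <= b_1 <= ... into windows: for every finite initial
   segment of A the tails of A are eventually sparse enough, so removing any
   one window leaves a set whose image has density at most 1/(q+1).  A tuple of
   length k meets at most k of 2k windows, so every point of f[A^k] lies in the
   image of at least k of the sets "A minus a window", whence f[A^k] has upper
   density at most 2/(q+1) for every q. *)

From HB Require Import structures.
From mathcomp Require Import all_boot all_order all_algebra.
From mathcomp Require Import boolp classical_sets reals sequences measure normedtype.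
From mathcomp Require Import Rstruct zify.
Import Order.TTheory GRing.Theory Num.Theory.
Local Open Scope classical_set_scope.

Definition count_lt (S : set nat) (m : nat) : nat :=
  (\sum_(i < m) ((i : nat) \in S))%N.

Lemma count_lt_leq S m : (count_lt S m <= m)%N.
Proof.
rewrite /count_lt -[X in (_ <= X)%N]card_ord -sum1_card.
by apply: leq_sum => i _; case: (_ \in _).
Qed.

Lemma count_ltS S m : count_lt S m.+1 = (count_lt S m + (m \in S))%N.
Proof. by rewrite /count_lt big_ord_recr. Qed.

Lemma subset_count_lt S T m : S `<=` T -> (count_lt S m <= count_lt T m)%N.
Proof.
move=> ST; apply: leq_sum => i _.
by case: (boolP (_ \in S)) => // /set_mem/ST/mem_set ->.
Qed.

Lemma count_lt_gt0 S m i : (i < m)%N -> S i -> (0 < count_lt S m)%N.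
Proof.
by move=> im Si; rewrite /count_lt (bigD1 (Ordinal im)) //= (mem_set Si).
Qed.

Lemma count_lt_eq0 S m : (forall x, S x -> (m <= x)%N) -> count_lt S m = 0%N.
Proof.
move=> Sm; rewrite /count_lt big1 // => i _.
by rewrite memNset // => /Sm; rewrite leqNgt ltn_ord.
Qed.

Lemma count_lt_seq (s : seq nat) m : (count_lt [set x | x \in s] m <= size s)%N.
Proof.
have mem_s i : (i \in [set x | x \in s]) = (i \in s).
  by apply/idP/idP => [/set_mem|/mem_set].
rewrite /count_lt; under eq_bigr do rewrite mem_s.
rewrite -(big_mkord xpredT (fun i => (i \in s) : nat)).
have -> : (\sum_(0 <= i < m) (i \in s) = count (mem s) (iota 0 m))%N.
  rewrite /index_iota subn0 -sum1_count [RHS]big_mkcond /=.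
  by apply: eq_bigr => i _; case: (i \in s).
rewrite -size_filter; apply: uniq_leq_size; first exact/filter_uniq/iota_uniq.
by move=> x; rewrite mem_filter => /andP[].
Qed.

Section UpperDensityZero.
Local Open Scope ring_scope.

Lemma upper_densityE A :
  upper_density A = limn_sup (fun n => ((count_lt A n)%:R / n%:R : Rr)).
Proof.
by congr limn_sup; apply: funext => n; rewrite /count_lt natr_sum.
Qed.

Lemma ltr_ratio_inv (a m q : nat) : (0 < m)%N ->
  (a%:R / m%:R < (q.+1)%:R^-1 :> Rr) -> (q.+1 * a < m)%N.
Proof.
move=> m0; rewrite ltr_pdivrMr ?ltr0n // => h.
by rewrite -(ltr_nat Rr) natrM -ltr_pdivlMl ?ltr0n // mulrC.
Qed.

Lemma ler_ratio_inv (a m q : nat) : (0 < m)%N ->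
  (q.+1 * a <= m)%N -> (a%:R / m%:R <= (q.+1)%:R^-1 :> Rr).
Proof.
by move=> m0 h; rewrite ler_pdivrMr ?ltr0n // ler_pdivlMl ?ltr0n // -natrM ler_nat.
Qed.

Lemma upper_density_eq0P A : upper_density A = 0 <->
  forall q, exists N, forall m, (N <= m)%N -> (q.+1 * count_lt A m <= m)%N.
Proof.
set u : nat -> Rr^o := fun n => ((count_lt A n)%:R / n%:R : Rr).
have u01 n : 0 <= u n <= 1.
  rewrite /u; case: n => [|n]; first by rewrite invr0 mulr0 lexx ler01.
  rewrite divr_ge0 ?ler0n //= ler_pdivrMr ?ltr0n // mul1r ler_nat.
  exact: count_lt_leq.
have u_bounded : bounded_fun u.
  exists 1; split => // M M1 x _; have /andP[u0 u1] := u01 x.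
  by rewrite /= ger0_norm //; apply: le_trans u1 (ltW M1).
have ub n : has_ubound (sdrop u n) by exists 1 => _ [k _ <-]; case/andP: (u01 k).
have ne n : sdrop u n !=set0 by exists (u n); exists n => /=.
have le_sups n m : (n <= m)%N -> u m <= sups u n.
  by move=> nm; apply: ub_le_sup => //; exists m.
have sups_ge0 n : 0 <= sups u n.
  by apply: le_trans (le_sups n n (leqnn n)); case/andP: (u01 n).
have lb : has_lbound (range (sups u)) by exists 0 => _ [n _ <-].
have ne_sups : range (sups u) !=set0 by exists (sups u 0); exists 0.
rewrite upper_densityE -/u limn_supE //; split.
- move=> u_inf q.
  have : inf (range (sups u)) < (q.+1%:R)^-1 by rewrite u_inf invr_gt0 ltr0n.
  case/inf_lt => // _ [N _ <-] hN; exists N => -[|m] Nm.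
    by rewrite /count_lt big_ord0 muln0.
  by apply/ltnW/ltr_ratio_inv => //; apply: le_lt_trans (le_sups _ _ Nm) hN.
- move=> h; apply/eqP; rewrite eq_le; apply/andP; split; last first.
    by apply: lb_le_inf => // _ [n _ <-].
  apply/ler_addgt0Pr => e e0; rewrite add0r.
  have [q qe] : exists q : nat, (q.+1%:R)^-1 < e.
    exists (Num.Def.archi_bound e^-1).
    rewrite -[_^-1]mul1r ltr_pdivrMr ?ltr0n // -ltr_pdivrMl // mulr1.
    apply: lt_le_trans (archi_boundP _) _; first by rewrite invr_ge0 ltW.
    by rewrite ler_nat.
  have [N hN] := h q.
  apply: le_trans (ltW qe); apply: le_trans (ge_inf lb _) _; first by exists N.
  apply: ge_sup => // _ [[|m] /= Nm <-]; rewrite /u.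
    by rewrite invr0 mulr0 invr_ge0 ler0n.
  exact/ler_ratio_inv/hN.
Qed.

End UpperDensityZero.

Lemma O_Borel_open U : O_open U -> O_Borel U.
Proof. exact: sub_sigma_algebra. Qed.

Lemma O_BorelC U : O_Borel U -> O_Borel (~` U).
Proof. by move=> /sigma_algebraCD; rewrite setTD. Qed.

Lemma O_Borel_bigcup (F : nat -> set Op) :
  (forall n, O_Borel (F n)) -> O_Borel (\bigcup_n F n).
Proof. exact: sigma_algebra_bigcup. Qed.

Lemma O_Borel_bigcap (F : nat -> set Op) :
  (forall n, O_Borel (F n)) -> O_Borel (\bigcap_n F n).
Proof.
move=> BF; rewrite -[X in O_Borel X]setCK setC_bigcap.
by apply: O_BorelC; apply: O_Borel_bigcup => n; apply: O_BorelC.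
Qed.

Lemma op_image_subset F X Y : X `<=` Y -> op_image F X `<=` op_image F Y.
Proof. by move=> XY _ [t Xt <-]; exists t => // i; apply: XY. Qed.

(* Below m, the image of f contains only finitely many points, each witnessed by
   one tuple; agreeing with f on these tuples keeps them in the image. *)
Lemma count_op_image_local k (f : Ops k) X m : exists L : list ((k.+1).-tuple nat),
  forall g, (forall t, List.In t L -> g t = f t) ->
  (count_lt (op_image (existT _ k f) X) m <= count_lt (op_image (existT _ k g) X) m)%N.
Proof.
elim: m => [|m [L IH]]; first by exists nil => g _; rewrite /count_lt big_ord0.
case: (boolP (m \in op_image (existT _ k f) X)) => [fm|nfm].
- have [t Xt ft] := set_mem fm.
  exists (t :: L) => g gf; rewrite !count_ltS fm.
  have -> : m \in op_image (existT _ k g) X.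
    by apply: mem_set; exists t => //=; rewrite gf //=; left.
  by rewrite leq_add2r; apply: IH => t' t'L; apply: gf; right.
- exists L => g gf; rewrite !count_ltS (negbTE nfm) addn0.
  exact: leq_trans (IH g gf) (leq_addr _ _).
Qed.

Lemma O_open_count_op_image (X : set nat) m (P : nat -> Prop) :
  (forall x y, (x <= y)%N -> P x -> P y) ->
  O_open [set F | P (count_lt (op_image F X) m)].
Proof.
move=> Pmono k f /= Pf; have [L fL] := @count_op_image_local k f X m.
by exists L => g gf; apply: Pmono _ _ (fL g gf) Pf.
Qed.

Definition decode_set (n : nat) : set nat :=
  if @unpickle (seq nat) n is Some s then [set x | x \in s] else set0.

Definition decode_size (n : nat) : nat :=
  if @unpickle (seq nat) n is Some s then size s else 0.

Lemma decode_set_pickle (s : seq nat) : decode_set (pickle s) = [set x | x \in s].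
Proof. by rewrite /decode_set pickleK. Qed.

Lemma count_lt_decode_set p m : (count_lt (decode_set p) m <= decode_size p)%N.
Proof.
rewrite /decode_set /decode_size; case: (unpickle p) => [s|]; first exact: count_lt_seq.
by rewrite /count_lt big1 // => i _; rewrite in_set0.
Qed.

Definition sparse (j : nat) (P : set nat) := forall m, (2^j * count_lt P m <= m)%N.

Definition blowup_at (q a : nat) (F : Op) := forall j N, exists p m,
  [/\ (N <= m)%N, sparse j (decode_set p) &
      (m < q.+1 * count_lt (op_image F (decode_set a `|` decode_set p)) m)%N].

Definition blowup (F : Op) := exists q a, blowup_at q a F.

Lemma O_Borel_blowup : O_Borel blowup.
Proof.
have -> : blowup = \bigcup_q \bigcup_a \bigcap_j \bigcap_N \bigcup_p \bigcup_m
    [set F | [/\ (N <= m)%N, sparse j (decode_set p) &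
      (m < q.+1 * count_lt (op_image F (decode_set a `|` decode_set p)) m)%N]].
  apply/seteqP; split => F.
  - move=> [q [a Fqa]]; exists q => //; exists a => // j _ N _.
    by have [p [m Fpm]] := Fqa j N; exists p => //; exists m.
  - move=> [q _ [a _ Fqa]]; exists q, a => j N.
    by have [p _ [m _ Fpm]] := Fqa j I N I; exists p, m.
apply: O_Borel_bigcup => q; apply: O_Borel_bigcup => a.
apply: O_Borel_bigcap => j; apply: O_Borel_bigcap => N.
apply: O_Borel_bigcup => p; apply: O_Borel_bigcup => m; apply: O_Borel_open.
apply: (O_open_count_op_image _ _
  (fun c => [/\ (N <= m)%N, sparse j (decode_set p) & (m < q.+1 * c)%N])).
by move=> x y xy [? ? mx]; split => //; apply: leq_trans mx (leq_mul _ xy).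
Qed.

Lemma sparse_geometric_sum (x : nat -> nat) m J L :
  (forall j, 2^j * x j <= m)%N ->
  (2^(J + L) * (\sum_(J <= j < J + L) x j) + 2 * m <= 2^L.+1 * m)%N.
Proof.
move=> xm; elim: L => [|L IH]; first by rewrite addn0 big_geq // muln0 add0n expn1.
rewrite addnS big_nat_recr ?leq_addr //=.
move: (xm (J + L)) IH; rewrite !expnS.
set a := 2^(J + L); set S := \sum_(J <= j < J + L) x j; set c := 2^L.
nia.
Qed.

Lemma count_lt_union_sparse X (P : nat -> set nat) m :
  (forall j, sparse j (P j)) ->
  (count_lt (X `|` \bigcup_j P j) m <= count_lt X m + \sum_(j < m) count_lt (P j) m)%N.
Proof.
move=> Psparse; rewrite /count_lt exchange_big /= -big_split /=.
apply: leq_sum => i _.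
case: (boolP ((i : nat) \in X `|` \bigcup_j P j)) => [/set_mem [Xi|[j _ Pji]]|//].
  by rewrite (mem_set Xi) leq_addr.
have jm : (j < m)%N.
  rewrite ltnNge; apply/negP => mj.
  have := Psparse j m; have := count_lt_gt0 _ _ _ (ltn_ord i) Pji.
  have : (2^m <= 2^j)%N by rewrite leq_pexp2l.
  have := ltn_expl m (ltnSn 1).
  nia.
by rewrite (bigD1 (Ordinal jm)) //= (mem_set Pji); lia.
Qed.

Lemma sparse_union_density0 X (P : nat -> set nat) KX (K : nat -> nat) :
  (forall m, count_lt X m <= KX)%N -> (forall j m, count_lt (P j) m <= K j)%N ->
  (forall j, sparse j (P j)) -> Idens0 (X `|` \bigcup_j P j).
Proof.
move=> XK PK Psparse; apply/upper_density_eq0P => r.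
pose J := r.+2; pose K0 := (KX + \sum_(j < J) K j)%N.
exists (maxn J (2 * (r.+1 * K0))) => m; rewrite geq_max => /andP[Jm K0m].
set T := (\sum_(J <= j < m) count_lt (P j) m)%N.
have head_tail : (\sum_(j < m) count_lt (P j) m =
    \sum_(j < J) count_lt (P j) m + T)%N.
  by rewrite /T -!(big_mkord xpredT (fun j => count_lt (P j) m)) (big_cat_nat (n := J)).
have head_le : (\sum_(j < J) count_lt (P j) m <= \sum_(j < J) K j)%N.
  by apply: leq_sum => j _; apply: PK.
have tail_le : (2^J * T <= 2 * m)%N.
  have := sparse_geometric_sum _ _ J (m - J) (fun j => Psparse j m).
  rewrite expnS expnD subnKC // -/T => h.
  by rewrite -(@leq_pmul2l (2^(m - J))) ?expn_gt0 //; lia.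
have pow_J : (4 * r.+1 <= 2^J)%N.
  by rewrite /J !expnS mulnA leq_pmul2l //; apply: ltn_expl.
have := count_lt_union_sparse X P m Psparse; have := XK m.
rewrite head_tail /K0 in K0m *; nia.
Qed.

Lemma blowup_not_clone F : blowup F -> ~ C_Idens0 F.
Proof.
move=> [q [a Fqa]] Fclone.
have /choice[pm Fpm] : forall j, exists pm : nat * nat,
    [/\ (j <= pm.2)%N, sparse j (decode_set pm.1) &
        (pm.2 < q.+1 * count_lt (op_image F (decode_set a `|` decode_set pm.1)) pm.2)%N].
  by move=> j; have [p [m h]] := Fqa j j; exists (p, m).
pose A := decode_set a `|` \bigcup_j decode_set (pm j).1.
have A0 : Idens0 A.
  apply: (sparse_union_density0 _ _ (decode_size a)
    (fun j => decode_size (pm j).1)) => [m|j m|j].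
  - exact: count_lt_decode_set.
  - exact: count_lt_decode_set.
  - by case: (Fpm j).
have [N FAN] := (upper_density_eq0P _).1 (Fclone A A0) q.
have [Nm _ large] := Fpm N.
have : (count_lt (op_image F (decode_set a `|` decode_set (pm N).1)) (pm N).2
        <= count_lt (op_image F A) (pm N).2)%N.
  by apply/subset_count_lt/op_image_subset => x [ax|px]; [left|right; exists N].
have := FAN _ Nm; nia.
Qed.

Lemma sparse_tail j (A T : set nat) N :
  (forall m, (N <= m)%N -> (2^j * count_lt A m <= m)%N) ->
  T `<=` [set x | A x /\ (N <= x)%N] -> sparse j T.
Proof.
move=> AN TA m; have [mN|Nm] := ltnP m N.
  by rewrite count_lt_eq0 ?muln0 // => x /TA [_]; apply: leq_trans (ltnW mN).
apply: leq_trans (AN _ Nm); rewrite leq_mul2l; apply/orP; right.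
by apply: subset_count_lt => x /TA [].
Qed.

Lemma count_op_image_finite_witness (F : Op) (X T : set nat) m :
  exists s : seq nat, (forall x, x \in s -> T x) /\
  (count_lt (op_image F (X `|` T)) m <= count_lt (op_image F (X `|` [set x | x \in s])) m)%N.
Proof.
elim: m => [|m [s [sT IH]]].
  by exists [::]; split => [x|]; rewrite ?in_nil // /count_lt !big_ord0.
case: (boolP (m \in op_image F (X `|` T))) => [Fm|nFm]; last first.
  exists s; split => //; rewrite !count_ltS (negbTE nFm) addn0.
  exact: leq_trans IH (leq_addr _ _).
have [t XTt Ft] := set_mem Fm.
pose s' := [seq x <- tval t | `[< T x >]] ++ s.
have ss' : [set x | x \in s] `<=` [set x | x \in s'].
  by move=> x /= xs; rewrite mem_cat xs orbT.
exists s'; split.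
  move=> x; rewrite mem_cat mem_filter => /orP[/andP[/asboolP //]|].
  exact: sT.
rewrite !count_ltS Fm.
have -> : m \in op_image F (X `|` [set x | x \in s']).
  apply: mem_set; exists t => // i.
  case: (XTt i) => [Xi|Ti]; [by left|right].
  by rewrite /= mem_cat mem_filter (asboolT Ti) /= mem_tnth.
rewrite leq_add2r; apply: leq_trans IH _.
by apply/subset_count_lt/op_image_subset => x [Xx|sx]; [left|right; apply: ss'].
Qed.

Lemma window_indicator_sum_le1 (b : nat -> nat) : (forall r, (b r <= b r.+1)%N) ->
  forall x R, (\sum_(r < R) ((b r <= x) && (x < b r.+1)) <= 1)%N.
Proof.
move=> bS x; elim => [|R IH]; first by rewrite big_ord0.
rewrite big_ord_recr /=.
case: (boolP ((b R <= x) && (x < b R.+1))) => [/andP[bRx _]|_]; last by rewrite addn0.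
rewrite big1 // => r _; suff -> : (b r <= x) && (x < b r.+1) = false by [].
apply/negbTE; rewrite negb_and -leqNgt; apply/orP; right.
apply: leq_trans bRx.
have b_mono := @homo_leq _ b (fun x y => (x <= y)%N) leqnn
  (fun y x z => @leq_trans y x z) bS.
by apply: b_mono; apply: ltn_ord.
Qed.

Definition outside_window (A : set nat) (b : nat -> nat) (r : nat) :=
  [set x | A x /\ ~~ ((b r <= x) && (x < b r.+1))%N].

(* A point of f[A^k], the image of a k-tuple t, lies in f[(A minus window r)^k]
   for every window r that t avoids, and t meets at most k of the windows. *)
Lemma op_image_outside_windows (F : Op) (A : set nat) (b : nat -> nat) R i :
  (forall r, (b r <= b r.+1)%N) ->
  (R * (i \in op_image F A) <=
   \sum_(r < R) (i \in op_image F (outside_window A b r)) +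
   arity F * (i \in op_image F A))%N.
Proof.
move=> bS; case: (boolP (i \in op_image F A)) => [FAi|_]; last by rewrite muln0.
have [t At Fti] := set_mem FAi; rewrite !muln1.
pose hits r := (\sum_(l < arity F) ((b r <= tnth t l) && (tnth t l < b r.+1)))%N.
have hits_or_image r : (1 <= (i \in op_image F (outside_window A b r)) + hits r)%N.
  case: (posnP (hits r)) => [/eqP|]; last by rewrite addn_gt0 orbC => ->.
  rewrite sum_nat_eq0 => /forallP hits0.
  suff -> : i \in op_image F (outside_window A b r) by [].
  by apply: mem_set; exists t => // l; split; [apply: At|have := hits0 l; case: (_ && _)].
have sum_hits : (\sum_(r < R) hits r <= arity F)%N.
  rewrite exchange_big /=; apply: (@leq_trans (\sum_(l < arity F) 1)%N).
    by apply: leq_sum => l _; apply: window_indicator_sum_le1.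
  by rewrite sum_nat_const card_ord muln1.
have : (R <= \sum_(r < R) (i \in op_image F (outside_window A b r)) +
            \sum_(r < R) hits r)%N.
  rewrite -big_split /= -[X in (X <= _)%N]card_ord -sum1_card.
  by apply: leq_sum => r _; apply: hits_or_image.
lia.
Qed.

Lemma count_op_image_outside_windows (F : Op) (A : set nat) (b : nat -> nat) R m :
  (forall r, (b r <= b r.+1)%N) ->
  (R * count_lt (op_image F A) m <=
   \sum_(r < R) count_lt (op_image F (outside_window A b r)) m +
   arity F * count_lt (op_image F A) m)%N.
Proof.
move=> bS; rewrite /count_lt exchange_big /= !big_distrr -big_split /=.
by apply: leq_sum => i _; apply: op_image_outside_windows.
Qed.

Lemma not_blowup_atP q a F : ~ blowup_at q a F ->
  exists j N, forall p m, (N <= m)%N -> sparse j (decode_set p) ->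
  (q.+1 * count_lt (op_image F (decode_set a `|` decode_set p)) m <= m)%N.
Proof.
move=> Fqa; apply: contrapT => nex; apply: Fqa => j N.
apply: contrapT => nFjN; apply: nex; exists j, N => p m Nm psparse.
by rewrite leqNgt; apply/negP => mF; apply: nFjN; exists p, m.
Qed.

Section NoBlowup.
Variables (F : Op) (A : set nat) (q : nat).
Hypotheses (A0 : Idens0 A) (noblowup : forall a, ~ blowup_at q a F).

Lemma tail_control b : exists bN : nat * nat, (b <= bN.1)%N /\
  forall T, T `<=` [set x | A x /\ (bN.1 <= x)%N] -> forall m, (bN.2 <= m)%N ->
  (q.+1 * count_lt (op_image F ([set x | A x /\ (x < b)%N] `|` T)) m <= m)%N.
Proof.
pose s := [seq x <- iota 0 b | `[< A x >]].
have sE : decode_set (pickle s) = [set x | A x /\ (x < b)%N].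
  rewrite decode_set_pickle; apply/seteqP; split => x /=;
    rewrite mem_filter mem_iota add0n /=; first by move=> /andP[/asboolP].
  by move=> [Ax xb]; rewrite (asboolT Ax) xb.
have [j [N control]] := not_blowup_atP _ _ _ (noblowup (pickle s)).
have [N1 AN1] := (upper_density_eq0P A).1 A0 (2^j).-1.
rewrite prednK ?expn_gt0 // in AN1.
exists (maxn b N1, N); split => [|T TA m Nm]; first exact: leq_maxl.
have [s' [s'T FTs']] := count_op_image_finite_witness F [set x | A x /\ (x < b)%N] T m.
apply: leq_trans (leq_mul (leqnn _) FTs') _.
have := control (pickle s') m Nm; rewrite sE decode_set_pickle; apply.
apply: (sparse_tail _ _ _ _ AN1) => x /s'T /TA [Ax bx].
by split => //; apply: leq_trans (leq_maxr b N1) bx.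
Qed.

Lemma count_op_image_le_double : exists N, forall m, (N <= m)%N ->
  (q.+1 * count_lt (op_image F A) m <= 2 * m)%N.
Proof.
have /choice[step stepP] := tail_control.
pose b r := iter r (fun c => (step c).1) 0.
have bS r : (b r <= b r.+1)%N by case: (stepP (b r)).
pose R := (arity F).*2.
exists (\max_(r < R) (step (b r)).2) => m Nm.
have window r : (r < R)%N ->
    (q.+1 * count_lt (op_image F (outside_window A b r)) m <= m)%N.
  move=> rR; have [_ control] := stepP (b r).
  have Nrm : ((step (b r)).2 <= m)%N.
    by apply: leq_trans Nm; apply: (leq_bigmax (Ordinal rR)).
  apply: leq_trans (control [set x | A x /\ (b r.+1 <= x)%N] _ m Nrm);
    first rewrite leq_mul2l; last by move=> x [].
  apply/orP; right; apply/subset_count_lt/op_image_subset => x [Ax].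
  by rewrite negb_and -ltnNge -leqNgt => /orP[]; [left|right].
have sum_windows : (q.+1 * \sum_(r < R) count_lt (op_image F (outside_window A b r)) m
    <= R * m)%N.
  rewrite big_distrr /= -[R in (_ <= R * m)%N]card_ord -sum_nat_const.
  by apply: leq_sum => r _; apply: window.
have := count_op_image_outside_windows F A b R m bS.
set c := count_lt _ m; set S := \sum_(r < R) _ => windows_cover.
have aF0 : (0 < arity F)%N by [].
have : (arity F * c <= S)%N by rewrite /R -addnn mulnDl leq_add2r in windows_cover.
rewrite -(leq_pmul2l (ltn0Sn q)) => /leq_trans/(_ sum_windows).
rewrite /R -muln2 => le2; rewrite -(leq_pmul2l aF0); lia.
Qed.

End NoBlowup.

Lemma clone_of_no_blowup F : ~ blowup F -> C_Idens0 F.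
Proof.
move=> nF A A0; apply/upper_density_eq0P => q.
have noblowup a : ~ blowup_at q.*2.+1 a F by move=> Fa; apply: nF; exists q.*2.+1, a.
have [N FAN] := count_op_image_le_double F A q.*2.+1 A0 noblowup.
exists N => m /FAN; rewrite -addnn; nia.
Qed.

Theorem mainTheorem2 : O_Borel C_Idens0.
Proof.
have -> : C_Idens0 = ~` blowup.
  apply/seteqP; split => F; first by move=> FC /blowup_not_clone.
  exact: clone_of_no_blowup.
by apply: O_BorelC; apply: O_Borel_blowup.
Qed.
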